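(* Every model of an extensionally complete set of sentences is separating.
   Context: Setting: higher-order logic (Church's simple theory of types, without a description operator), with its standard Hilbert-style proof system (logical axioms for truth values, Leibniz' law, extensionality, $\beta$-reduction, and the rule of equality substitution) and Henkin semantics: an interpretation $I$ consists of domains $D_\alpha$ ($D_o=\{\mathsf T,\mathsf F\}$, $D_{\alpha\to\beta}$ a set of functions) and a valuation of the constants (equality denoting identity) such that every term has a denotation; $V(t,I)$ is the denotation of a closed term $t$. Sentences are closed terms of type $o$; a model of a set of sentences is an interpretation in which each is true. A set $S$ of sentences is extensionally complete if for every pair $r,s$ of closed terms of the same function type $\alpha\to\beta$ there is a closed term $t$ of type $\alpha$ such that $r\neq s\to(r\,t)\neq(s\,t)$ is derivable from $S$. An interpretation $I$ is separating if for every pair $r,s$ of closed terms of the same function type $\alpha\to\beta$ with $V(r,I)\neq V(s,I)$ there is a closed term $t$ of type $\alpha$ (over the given alphabet) with $V((r\,t),I)\neq V((s\,t),I)$. *)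

(* Syntax and Henkin semantics of Church's simple type theory
   (Andrews' Q0 without the description operator), with intrinsically typed
   de Bruijn terms. *)
From Stdlib Require Import List.
Import ListNotations.


Inductive ty (Bs : Type) : Type :=
| Base : Bs -> ty Bs
| To : ty Bs
| Arr : ty Bs -> ty Bs -> ty Bs.
Arguments To {Bs}.
Arguments Base {Bs}.
Arguments Arr {Bs}.

(** An alphabet: base types, non-logical constants with their types.
    (The logical constants are the equality constants Q_a at every type.) *)
Record signature := {
  sbase : Type;
  sconst : Type;
  ctype : sconst -> ty sbase
}.


Definition tyS (S : signature) := ty (sbase S).

(** Variables of type t in context G (index 0 = innermost binder). *)
Definition var {Bs} (G : list (ty Bs)) (t : ty Bs) : Type :=
  { n : nat | nth_error G n = Some t }.


Inductive tm (S : signature) : list (tyS S) -> tyS S -> Type :=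
| Var (G : list (tyS S)) (t : tyS S) : var G t -> tm S G t
| Con (G : list (tyS S)) (c : sconst S) : tm S G (ctype S c)
| Eq (G : list (tyS S)) (a : tyS S) : tm S G (Arr a (Arr a To))
| App (G : list (tyS S)) (a b : tyS S) : tm S G (Arr a b) -> tm S G a -> tm S G b
| Lam (G : list (tyS S)) (a b : tyS S) : tm S (a :: G) b -> tm S G (Arr a b).

Arguments Var {S G t}.
Arguments Con {S G}.
Arguments Eq {S G}.
Arguments App {S G a b}.
Arguments Lam {S G a b}.

Definition cast_some {Bs} (P : ty Bs -> Type) {s t : ty Bs}
  (h : Some s = Some t) (x : P s) : P t :=
  match h in _ = o return match o with Some u => P u | None => unit end with
  | eq_refl => x
  end.

Definition absurd_none {Bs} (P : Type) {t : ty Bs} (h : None = Some t) : P :=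
  match h in _ = o return match o with None => unit | Some _ => P end with
  | eq_refl => tt
  end.

Definition ren {Bs} (G H : list (ty Bs)) := forall t, var G t -> var H t.

Definition lift_ren {Bs} {G H : list (ty Bs)} {s} (r : ren G H) : ren (s :: G) (s :: H) :=
  fun t v =>
    match v with
    | exist _ n h =>
      match n as n0 return nth_error (s :: G) n0 = Some t -> var (s :: H) t with
      | 0 => fun h0 => exist (fun k => nth_error (s :: H) k = Some t) 0 h0
      | S m => fun h0 => let w := r t (exist _ m h0) in
                        exist _ (S (proj1_sig w)) (proj2_sig w)
      end h
    end.

Fixpoint rename {S : signature} {G t} (M : tm S G t) : forall H, ren G H -> tm S H t :=
  match M in tm _ G0 t0 return forall H, ren G0 H -> tm S H t0 with
  | Var v => fun H r => Var (r _ v)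
  | Con c => fun H r => Con c
  | Eq a => fun H r => Eq a
  | App f x => fun H r => App (rename f H r) (rename x H r)
  | Lam b => fun H r => Lam (rename b _ (lift_ren r))
  end.

Definition shift {Bs} {G : list (ty Bs)} {s} : ren G (s :: G) :=
  fun t v => match v with exist _ n h => exist _ (S n) h end.

Definition sub {S : signature} (G H : list (tyS S)) := forall t, var G t -> tm S H t.

Definition lift_sub {S : signature} {G H : list (tyS S)} {s} (σ : sub G H)
  : sub (s :: G) (s :: H) :=
  fun t v =>
    match v with
    | exist _ n h =>
      match n as n0 return nth_error (s :: G) n0 = Some t -> tm S (s :: H) t with
      | 0 => fun h0 => Var (exist (fun k => nth_error (s :: H) k = Some t) 0 h0)
      | S m => fun h0 => rename (σ t (exist _ m h0)) _ shift
      end h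
    end.

Fixpoint subst {S : signature} {G t} (M : tm S G t) : forall H, sub G H -> tm S H t :=
  match M in tm _ G0 t0 return forall H, sub G0 H -> tm S H t0 with
  | Var v => fun H σ => σ _ v
  | Con c => fun H σ => Con c
  | Eq a => fun H σ => Eq a
  | App f x => fun H σ => App (subst f H σ) (subst x H σ)
  | Lam b => fun H σ => Lam (subst b _ (lift_sub σ))
  end.

Definition sub0 {S : signature} {G : list (tyS S)} {a} (N : tm S G a) : sub (a :: G) G :=
  fun t v =>
    match v with
    | exist _ n h =>
      match n as n0 return nth_error (a :: G) n0 = Some t -> tm S G t with
      | 0 => fun h0 => cast_some (tm S G) h0 N
      | S m => fun h0 => Var (exist _ m h0)
      end h
    end.

Definition subst0 {S : signature} {G a b} (M : tm S (a :: G) b) (N : tm S G a) : tm S G b :=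
  subst M G (sub0 N).

Definition v0 {Bs} {G : list (ty Bs)} {a} : var (a :: G) a := exist _ 0 eq_refl.
Definition v1 {Bs} {G : list (ty Bs)} {a b} : var (b :: a :: G) a := exist _ 1 eq_refl.
Definition v2 {Bs} {G : list (ty Bs)} {a b c} : var (c :: b :: a :: G) a := exist _ 2 eq_refl.

Definition eqt {S : signature} {G a} (A B : tm S G a) : tm S G To := App (App (Eq a) A) B.
Definition Tr {S : signature} {G} : tm S G To := eqt (Eq To) (Eq To).
Definition Fa {S : signature} {G} : tm S G To := eqt (Lam (a := To) Tr) (Lam (Var v0)).
Definition Forall {S : signature} {G a} (A : tm S (a :: G) To) : tm S G To :=
  App (App (Eq (Arr a To)) (Lam Tr)) (Lam A).
(** ∧_{ooo} := λx_o λy_o [ [λg_{ooo}. g T T] = [λg_{ooo}. g x y] ] *)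
Definition AndC {S : signature} {G} : tm S G (Arr To (Arr To To)) :=
  Lam (Lam (eqt (Lam (a := Arr To (Arr To To)) (App (App (Var v0) Tr) Tr))
                (Lam (a := Arr To (Arr To To)) (App (App (Var v0) (Var v2)) (Var v1))))).
Definition andt {S : signature} {G} (A B : tm S G To) : tm S G To := App (App AndC A) B.
(** ⊃_{ooo} := λx_o λy_o [x = [x ∧ y]] *)
Definition ImpC {S : signature} {G} : tm S G (Arr To (Arr To To)) :=
  Lam (Lam (eqt (Var v1) (andt (Var v1) (Var v0)))).
Definition impt {S : signature} {G} (A B : tm S G To) : tm S G To := App (App ImpC A) B.
Definition nott {S : signature} {G} (A : tm S G To) : tm S G To := App (App (Eq To) Fa) A.
Definition neqt {S : signature} {G a} (A B : tm S G a) : tm S G To := nott (eqt A B).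

(** Axioms of Q0 (axiom 5, description, omitted). *)
(* (1)  g_{oo} T ∧ g_{oo} F = ∀x_o. g_{oo} x_o     context [g] *)
Definition ax1 {S : signature} : tm S [Arr To To] To :=
  eqt (andt (App (Var v0) Tr) (App (Var v0) Fa))
      (Forall (a := To) (App (Var v1) (Var v0))).
(* (2^a)  x_a = y_a ⊃ h_{oa} x = h_{oa} y          context [x; y; h] *)
Definition ax2 {S : signature} (a : tyS S) : tm S [a; a; Arr a To] To :=
  impt (eqt (Var v0) (Var v1)) (eqt (App (Var v2) (Var v0)) (App (Var v2) (Var v1))).
(* (3^{ab})  f = g  =  ∀x_a. f x = g x              context [f; g] *)
Definition ax3 {S : signature} (a b : tyS S) : tm S [Arr a b; Arr a b] To :=
  eqt (eqt (Var v0) (Var v1))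
      (Forall (a := a) (eqt (App (Var v1) (Var v0)) (App (Var v2) (Var v0)))).

(** One-occurrence replacement: [repl A A' C D] iff D is C with one occurrence
    of A (at a position whose local context is G0) replaced by A'. *)
Inductive repl {S : signature} {G0 : list (tyS S)} {a} (A A' : tm S G0 a)
  : forall G t, tm S G t -> tm S G t -> Prop :=
| rp_here : repl A A' G0 a A A'
| rp_appl G s t (f f' : tm S G (Arr s t)) (x : tm S G s) :
    repl A A' G (Arr s t) f f' -> repl A A' G t (App f x) (App f' x)
| rp_appr G s t (f : tm S G (Arr s t)) (x x' : tm S G s) :
    repl A A' G s x x' -> repl A A' G t (App f x) (App f x')
| rp_lam G s t (b b' : tm S (s :: G) t) :
    repl A A' (s :: G) t b b' -> repl A A' G (Arr s t) (Lam b) (Lam b').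
Arguments repl {S G0 a} A A' {G t}.

(** Derivability from a set Hs of sentences in the Hilbert system:
    axioms 1–4 (4 = β-conversion), hypotheses, Rule R, and renaming of free
    variables (the de Bruijn counterpart of named free variables). *)
Inductive deriv {S : signature} (Hs : tm S [] To -> Prop)
  : forall G, tm S G To -> Prop :=
| dv_hyp A : Hs A -> deriv Hs [] A
| dv_ax1 : deriv Hs _ ax1
| dv_ax2 a : deriv Hs _ (ax2 a)
| dv_ax3 a b : deriv Hs _ (ax3 a b)
| dv_ax4 G a b (M : tm S (a :: G) b) (N : tm S G a) :
    deriv Hs G (eqt (App (Lam M) N) (subst0 M N))
| dv_R G0 a (A A' : tm S G0 a) G (C D : tm S G To) :
    deriv Hs G0 (eqt A A') -> deriv Hs G C -> repl A A' C D -> deriv Hs G D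
| dv_ren G H (r : ren G H) (A : tm S G To) :
    deriv Hs G A -> deriv Hs H (rename A H r).
Arguments deriv {S} Hs {G}.

Definition env {Bs} (D : ty Bs -> Type) (G : list (ty Bs)) := forall t, var G t -> D t.

Definition enil {Bs} (D : ty Bs -> Type) : env D [] :=
  fun t v => match v with
             | exist _ n h =>
               match n as n0 return nth_error (@nil (ty Bs)) n0 = Some t -> D t with
               | 0 => fun h0 => absurd_none (D t) h0
               | S m => fun h0 => absurd_none (D t) h0
               end h
             end.

Definition econs {Bs} {D : ty Bs -> Type} {G s} (d : D s) (e : env D G) : env D (s :: G) :=
  fun t v => match v with
             | exist _ n h =>
               match n as n0 return nth_error (s :: G) n0 = Some t -> D t with
               | 0 => fun h0 => cast_some D h0 d
               | S m => fun h0 => e t (exist _ m h0)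
               end h
             end.

(** Henkin interpretations (general models): domains D_a, with D_o ≅ {T,F}
    (via the bijection tv), D_{a→b} a set of functions (extensional
    application), valuation of constants, equality denoting identity, and a
    denotation function for all terms (every term has a denotation). *)
Record interp (S : signature) := {
  D : tyS S -> Type;
  app : forall a b, D (Arr a b) -> D a -> D b;
  app_ext : forall a b (f g : D (Arr a b)), (forall x, app a b f x = app a b g x) -> f = g;
  D_ne : forall b, inhabited (D (Base b));
  tv : D To -> bool;
  tv_inj : forall x y, tv x = tv y -> x = y;
  tv_surj : forall v, exists x, tv x = v;
  cval : forall c, D (ctype S c);
  qval : forall a, D (Arr a (Arr a To));
  qval_spec : forall a x y, tv (app _ _ (app _ _ (qval a) x) y) = true <-> x = y;
  ev : forall G t, tm S G t -> env D G -> D t;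
  ev_var : forall G t (v : var G t) e, ev G t (Var v) e = e t v;
  ev_con : forall G c e, ev G _ (Con c) e = cval c;
  ev_eq : forall G a e, ev G _ (Eq a) e = qval a;
  ev_app : forall G a b (f : tm S G (Arr a b)) x e,
      ev G b (App f x) e = app a b (ev G _ f e) (ev G a x e);
  ev_lam : forall G a b (M : tm S (a :: G) b) e d,
      app a b (ev G _ (Lam M) e) d = ev (a :: G) b M (econs d e)
}.
Arguments D {S} i _.
Arguments app {S} i {a b}.
Arguments tv {S} i.
Arguments ev {S} i {G t}.

Definition V {S : signature} (I : interp S) {t} (M : tm S [] t) : D I t := ev I M (enil (D I)).

Definition is_model {S : signature} (I : interp S) (Hs : tm S [] To -> Prop) : Prop :=
  forall A, Hs A -> tv I (V I A) = true.

Definition ext_complete {S : signature} (Hs : tm S [] To -> Prop) : Prop :=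
  forall a b (r s : tm S [] (Arr a b)),
    exists t : tm S [] a, deriv Hs (impt (neqt r s) (neqt (App r t) (App s t))).

Definition separating {S : signature} (I : interp S) : Prop :=
  forall a b (r s : tm S [] (Arr a b)),
    V I r <> V I s -> exists t : tm S [] a, V I (App r t) <> V I (App s t).

(* Every axiom and rule of the Hilbert system is sound for Henkin
   interpretations, so every sentence derivable from Hs is true in a model I
   of Hs. Given closed r, s with V(r) <> V(s), extensional completeness
   supplies t with r <> s ⊃ r t <> s t derivable; this sentence is true in I
   and its antecedent is true, hence V(r t) <> V(s t). *)
From Stdlib Require List.
From Stdlib Require Import Bool FunctionalExtensionality ProofIrrelevance.
Import List.ListNotations.

Section Semantics.
Variable S : signature.
Variable I : interp S.

Lemma env_nil (e : env (D I) []) : e = enil (D I).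
Proof.
  apply functional_extensionality_dep; intro t.
  apply functional_extensionality; intros [n h].
  destruct n; discriminate h.
Qed.

Lemma ev_rename G t (M : tm S G t) :
  forall H (r : ren G H) e, ev I (rename M H r) e = ev I M (fun t v => e t (r t v)).
Proof.
  induction M; intros; simpl.
  - rewrite !ev_var; reflexivity.
  - rewrite !ev_con; reflexivity.
  - rewrite !ev_eq; reflexivity.
  - rewrite !ev_app, IHM1, IHM2; reflexivity.
  - apply (app_ext _ I); intro d; rewrite !ev_lam, IHM.
    f_equal; apply functional_extensionality_dep; intro u.
    apply functional_extensionality; intros [[|n] h]; cbn; [reflexivity|].
    destruct (r u (exist _ n h)); reflexivity.
Qed.

Lemma ev_subst G t (M : tm S G t) :
  forall H (σ : sub G H) e, ev I (subst M H σ) e = ev I M (fun t v => ev I (σ t v) e).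
Proof.
  induction M; intros; simpl.
  - rewrite !ev_var; reflexivity.
  - rewrite !ev_con; reflexivity.
  - rewrite !ev_eq; reflexivity.
  - rewrite !ev_app, IHM1, IHM2; reflexivity.
  - apply (app_ext _ I); intro d; rewrite !ev_lam, IHM.
    f_equal; apply functional_extensionality_dep; intro u.
    apply functional_extensionality; intros [[|n] h]; cbn.
    + rewrite ev_var; reflexivity.
    + rewrite ev_rename; f_equal.
      apply functional_extensionality_dep; intro w.
      apply functional_extensionality; intros [m h']; reflexivity.
Qed.

Lemma ev_cast_some G s t (h : Some s = Some t) (N : tm S G s) e :
  ev I (cast_some (tm S G) h N) e = cast_some (D I) h (ev I N e).
Proof.
  assert (s = t) by congruence; subst t.
  rewrite (proof_irrelevance _ h eq_refl); reflexivity.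
Qed.

Lemma ev_subst0 G a b (M : tm S (a :: G) b) (N : tm S G a) e :
  ev I (subst0 M N) e = ev I M (econs (ev I N e) e).
Proof.
  unfold subst0; rewrite ev_subst; f_equal.
  apply functional_extensionality_dep; intro t.
  apply functional_extensionality; intros [[|n] h]; cbn.
  - apply ev_cast_some.
  - rewrite ev_var; reflexivity.
Qed.

Lemma ev_repl G0 a (A A' : tm S G0 a) G t (C C' : tm S G t) :
  repl A A' C C' -> (forall e, ev I A e = ev I A' e) -> forall e, ev I C e = ev I C' e.
Proof.
  induction 1; intros HA e; auto.
  - rewrite !ev_app, IHrepl; auto.
  - rewrite !ev_app, IHrepl; auto.
  - apply (app_ext _ I); intro d; rewrite !ev_lam; auto.
Qed.

Lemma tv_eqt G a (A B : tm S G a) e :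
  tv I (ev I (eqt A B) e) = true <-> ev I A e = ev I B e.
Proof. unfold eqt; rewrite !ev_app, ev_eq; apply qval_spec. Qed.

Lemma tv_eqt_To G (A B : tm S G To) e :
  tv I (ev I (eqt A B) e) = true <-> (tv I (ev I A e) = true <-> tv I (ev I B e) = true).
Proof.
  rewrite tv_eqt; split.
  - intros ->; reflexivity.
  - intro HAB; apply (tv_inj _ I), eq_true_iff_eq, HAB.
Qed.

Lemma tv_Tr G (e : env (D I) G) : tv I (ev I Tr e) = true.
Proof. apply tv_eqt; reflexivity. Qed.

Lemma tv_Fa G (e : env (D I) G) : tv I (ev I Fa e) = false.
Proof.
  apply not_true_iff_false; intro HF; apply tv_eqt in HF.
  destruct (tv_surj _ I false) as [x Hx].
  assert (Hxx : app I (ev I (Lam (a := To) Tr) e) x = app I (ev I (Lam (Var v0)) e) x)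
    by (rewrite HF; reflexivity).
  rewrite !ev_lam, ev_var in Hxx; cbn in Hxx.
  rewrite <- Hxx, tv_Tr in Hx; discriminate.
Qed.

Lemma tv_true_Tr {G} (e : env (D I) G) {x} : tv I x = true -> x = ev I Tr e.
Proof. intro Hx; apply (tv_inj _ I); rewrite Hx, tv_Tr; reflexivity. Qed.

Lemma tv_false_Fa {G} (e : env (D I) G) {x} : tv I x = false -> x = ev I Fa e.
Proof. intro Hx; apply (tv_inj _ I); rewrite Hx, tv_Fa; reflexivity. Qed.

Definition proj1_To : D I (Arr To (Arr To To)) :=
  ev I (G := []) (Lam (a := To) (Lam (a := To) (Var v1))) (enil _).
Definition proj2_To : D I (Arr To (Arr To To)) :=
  ev I (G := []) (Lam (a := To) (Lam (a := To) (Var v0))) (enil _).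

Lemma app_proj1_To x y : app I (app I proj1_To x) y = x.
Proof. unfold proj1_To; rewrite !ev_lam, ev_var; reflexivity. Qed.

Lemma app_proj2_To x y : app I (app I proj2_To x) y = y.
Proof. unfold proj2_To; rewrite !ev_lam, ev_var; reflexivity. Qed.

(* [A ∧ B] compares [λg. g T T] with [λg. g A B]; the projections tell the
   two functions apart unless both arguments denote truth. *)
Lemma tv_andt G (A B : tm S G To) e :
  tv I (ev I (andt A B) e) = tv I (ev I A e) && tv I (ev I B e).
Proof.
  apply eq_true_iff_eq; rewrite andb_true_iff.
  unfold andt, AndC; rewrite !ev_app, !ev_lam, tv_eqt.
  split.
  - intro Hfun.
    assert (H1 := f_equal (fun f => app I f proj1_To) Hfun).
    assert (H2 := f_equal (fun f => app I f proj2_To) Hfun).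
    cbn beta in H1, H2; rewrite !ev_lam, !ev_app, !ev_var in H1, H2; cbn in H1, H2.
    rewrite !app_proj1_To in H1; rewrite !app_proj2_To in H2.
    rewrite <- H1, <- H2, !tv_Tr; auto.
  - intros [Hx Hy]; apply (app_ext _ I); intro g.
    rewrite !ev_lam, !ev_app, !ev_var; cbn.
    f_equal; [f_equal|]; symmetry; apply tv_true_Tr; assumption.
Qed.

Lemma tv_impt G (A B : tm S G To) e :
  tv I (ev I (impt A B) e) = implb (tv I (ev I A e)) (tv I (ev I B e)).
Proof.
  apply eq_true_iff_eq; unfold impt, ImpC; rewrite !ev_app, !ev_lam.
  rewrite tv_eqt_To, tv_andt, !ev_var; cbn.
  destruct (tv I (ev I A e)), (tv I (ev I B e)); cbn; intuition.
Qed.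

Lemma tv_neqt G a (A B : tm S G a) e :
  tv I (ev I (neqt A B) e) = true <-> ev I A e <> ev I B e.
Proof.
  change (neqt A B) with (eqt (G := G) Fa (eqt A B)).
  rewrite tv_eqt_To, <- tv_eqt, tv_Fa.
  destruct (tv I (ev I (eqt A B) e)); intuition congruence.
Qed.

Lemma tv_Forall G a (A : tm S (a :: G) To) e :
  tv I (ev I (Forall A) e) = true <-> forall d, tv I (ev I A (econs d e)) = true.
Proof.
  unfold Forall; rewrite !ev_app, ev_eq, qval_spec; split.
  - intros Hfun d.
    assert (Hd := f_equal (fun f => app I f d) Hfun); cbn beta in Hd.
    rewrite !ev_lam in Hd; rewrite <- Hd; apply tv_Tr.
  - intro HA; apply (app_ext _ I); intro d; rewrite !ev_lam.
    apply (tv_inj _ I); rewrite tv_Tr, HA; reflexivity.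
Qed.

Lemma ax1_valid e : tv I (ev I ax1 e) = true.
Proof.
  unfold ax1; rewrite tv_eqt_To, tv_andt, andb_true_iff, tv_Forall.
  rewrite !ev_app, !ev_var; cbn.
  split.
  - intros [HT HF] d; rewrite ev_app, !ev_var; cbn.
    destruct (tv I d) eqn:Hd.
    + rewrite (tv_true_Tr e Hd); exact HT.
    + rewrite (tv_false_Fa e Hd); exact HF.
  - intro Hall.
    assert (HT := Hall (ev I Tr e)); assert (HF := Hall (ev I Fa e)).
    rewrite ev_app, !ev_var in HT, HF; cbn in HT, HF; auto.
Qed.

Lemma ax2_valid a e : tv I (ev I (ax2 a) e) = true.
Proof.
  unfold ax2; rewrite tv_impt; apply implb_true_iff.
  rewrite !tv_eqt, !ev_app; intros ->; reflexivity.
Qed.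

Lemma ax3_valid a b e : tv I (ev I (ax3 a b) e) = true.
Proof.
  unfold ax3; rewrite tv_eqt_To, tv_eqt, tv_Forall, !ev_var; cbn.
  split.
  - intros Hfg d; apply tv_eqt; rewrite !ev_app, !ev_var; cbn.
    exact (f_equal (fun f => app I f d) Hfg).
  - intro Hall; apply (app_ext _ I); intro d.
    specialize (Hall d); apply tv_eqt in Hall.
    rewrite !ev_app, !ev_var in Hall; exact Hall.
Qed.

Lemma deriv_sound (Hs : tm S [] To -> Prop) G (A : tm S G To) :
  is_model I Hs -> deriv Hs A -> forall e, tv I (ev I A e) = true.
Proof.
  intros Hmodel Hder; induction Hder; intro e.
  - rewrite (env_nil e); apply Hmodel; assumption.
  - apply ax1_valid.
  - apply ax2_valid.
  - apply ax3_valid.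
  - apply tv_eqt; rewrite ev_app, ev_lam, ev_subst0; reflexivity.
  - erewrite <- ev_repl; [apply IHHder2 | eassumption |].
    intro e'; apply tv_eqt, IHHder1.
  - rewrite ev_rename; apply IHHder.
Qed.

End Semantics.

Theorem mainTheorem18 (S : signature) (Hs : tm S nil To -> Prop) (I : interp S) :
  ext_complete Hs -> is_model I Hs -> separating I.
Proof.
  intros Hcomplete Hmodel a b r s Hrs.
  destruct (Hcomplete a b r s) as [t Ht]; exists t.
  assert (Himp := deriv_sound S I Hs _ _ Hmodel Ht (enil _)).
  rewrite tv_impt, implb_true_iff, !tv_neqt in Himp.
  exact (Himp Hrs).
Qed.
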